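(* For all $(u_1,u_2)\in[0,1)^2$ and all integers $n\ge 0$, $$\big|\lfloor u_1\lfloor nu_2\rfloor\rfloor-\lfloor u_2\lfloor nu_1\rfloor\rfloor\big|\le 1.$$ *)

From mathcomp Require Import all_boot all_order all_algebra.
Set Implicit Arguments. Unset Strict Implicit. Unset Printing Implicit Defensive.

(* Both arguments of the outer floors lie in the window (u1 u2 n - 1, u1 u2 n]:
   for 0 <= u <= 1, replacing t by its floor in u t loses u (t - floor t) < 1.
   The floors of two numbers in such a window differ by at most 1. *)
From mathcomp Require Import all_boot all_order all_algebra.
From mathcomp Require Import ring lra zify.
Import Order.TTheory GRing.Theory Num.Theory.
Local Open Scope ring_scope.

Section FloorWindow.

Context {R : archiRealDomainType}.
Implicit Types (x y z t u : R).

Lemma floor_window x y : x - 1 < y -> y <= x ->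
  Num.floor x - 1 <= Num.floor y <= Num.floor x.
Proof.
move=> ltxy leyx; rewrite le_floor // andbT floor_ge_int intrB.
have := floor_le x; lra.
Qed.

Lemma floor_window_dist x y z : x - 1 < y -> y <= x -> x - 1 < z -> z <= x ->
  `|Num.floor y - Num.floor z| <= 1.
Proof.
move=> /floor_window Hy /Hy/andP[y1 y2] /floor_window Hz /Hz/andP[z1 z2].
rewrite ler_norml; apply/andP; split; lia.
Qed.

Lemma mulr_floor_window t u : 0 <= u -> u <= 1 ->
  u * t - 1 < u * (Num.floor t)%:~R <= u * t.
Proof.
move=> u_ge0 u_le1; have /andP[ft_le ft_gt] := floor_itv t.
rewrite intrD in ft_gt.
have frac_ge0 : 0 <= t - (Num.floor t)%:~R by rewrite subr_ge0.
have : u * (t - (Num.floor t)%:~R) <= t - (Num.floor t)%:~R.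
  by rewrite ler_piMl.
rewrite ler_wpM2l // andbT; lra.
Qed.

End FloorWindow.

Theorem lemma2p2 (R : archiRealFieldType) (u1 u2 : R) (n : nat)
  (h1 : 0 <= u1) (h1' : u1 < 1) (h2 : 0 <= u2) (h2' : u2 < 1) :
  `| Num.floor (u1 * (Num.floor (n%:R * u2))%:~R)
     - Num.floor (u2 * (Num.floor (n%:R * u1))%:~R) | <= 1.
Proof.
have /andP[lo1 hi1] := mulr_floor_window (n%:R * u2) u1 h1 (ltW h1').
have /andP[lo2 hi2] := mulr_floor_window (n%:R * u1) u2 h2 (ltW h2').
have commute_u : u2 * (n%:R * u1) = u1 * (n%:R * u2) by ring.
rewrite commute_u in lo2 hi2.
exact: floor_window_dist lo1 hi1 lo2 hi2.
Qed.
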